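(* Suppose GDD message passing reaches a fixed point in finitely many steps, i.e. it reaches messages $\boldsymbol\lambda$ such that performing the block update for any $c\in\mathcal{C}'$ does not change $\boldsymbol\lambda$. Let $b_t$, $t\in\mathcal{T}$, be the beliefs for these messages. Then for every $c\in\mathcal{C}'$ and every $s\in\mathcal{S}(c)\setminus\{c\}$ there exist $\hat{\mathbf{x}}_c\in\arg\max_{\mathbf{x}_c}b_c(\mathbf{x}_c)$ and $\bar{\mathbf{x}}_s\in\arg\max_{\mathbf{x}_s}b_s(\mathbf{x}_s)$ such that the restriction $\hat{\mathbf{x}}_s$ of $\hat{\mathbf{x}}_c$ to $s$ equals $\bar{\mathbf{x}}_s$.
   Context: Let $\mathcal{V}=\{1,\dots,n\}$; each variable $x_i$ takes values in a finite set, $\mathbf{x}_s=(x_i)_{i\in s}$ for $s\subseteq\mathcal{V}$. Let $\mathcal{C}$ be a collection of subsets of $\mathcal{V}$ with real potentials $\theta_c(\mathbf{x}_c)$. Let $\mathcal{C}'$ be a finite collection of subsets of $\mathcal{V}$ and for each $c\in\mathcal{C}'$ let $\mathcal{S}(c)$ be a collection of subsets of $c$ (possibly containing $c$), with $\mathcal{S}(c)\setminus\{c\}\neq\emptyset$ and $\mathcal{C}'\cup\bigcup_c\mathcal{S}(c)\supseteq\mathcal{C}$; put $\mathcal{T}=\mathcal{C}'\cup\bigcup_{c\in\mathcal{C}'}\mathcal{S}(c)$. Messages are reals $\lambda_{c\to s}(\mathbf{x}_s)$, $c\in\mathcal{C}'$, $s\in\mathcal{S}(c)\setminus\{c\}$.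 For $t\in\mathcal{T}$: $\hat\theta_t=\mathbb{1}(t\in\mathcal{C})\theta_t$; $\gamma_t(\mathbf{x}_t)=\mathbb{1}(t\in\mathcal{C}')\sum_{\hat s\in\mathcal{S}(t)\setminus\{t\}}\lambda_{t\to\hat s}(\mathbf{x}_{\hat s})$; $\lambda_t(\mathbf{x}_t)=\sum_{c'\in\mathcal{C}':\,t\in\mathcal{S}(c')\setminus\{c'\}}\lambda_{c'\to t}(\mathbf{x}_t)$; beliefs $b_t=\hat\theta_t+\lambda_t-\gamma_t$. For $s\in\mathcal{S}(c)\setminus\{c\}$, $\lambda_s^{-c}(\mathbf{x}_s)=\sum_{\hat c\in\mathcal{C}':\,\hat c\ne c,\ s\in\mathcal{S}(\hat c)\setminus\{\hat c\}}\lambda_{\hat c\to s}(\mathbf{x}_s)$. GDD message passing starts from zero messages and repeatedly sweeps over $c\in\mathcal{C}'$, each time applying the block update: replace simultaneously every $\lambda_{c\to s}(\mathbf{x}_s)$, $s\in\mathcal{S}(c)\setminus\{c\}$, by $\lambda^*_{c\to s}(\mathbf{x}_s)=-\hat\theta_s(\mathbf{x}_s)+\gamma_s(\mathbf{x}_s)-\lambda_s^{-c}(\mathbf{x}_s)+\frac{1}{|\mathcal{S}(c)\setminus\{c\}|}\max_{\mathbf{x}_{c\setminus s}}[\hat\theta_c(\mathbf{x}_c)+\lambda_c(\mathbf{x}_c)+\sum_{\hat s\in\mathcal{S}(c)\setminus\{c\}}(\hat\theta_{\hat s}-\gamma_{\hat s}+\lambda^{-c}_{\hat s})(\mathbf{x}_{\hat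 s})]$, computed from the current messages. *)

From HB Require Import structures.
From mathcomp Require Import all_boot all_order all_algebra.
From mathcomp Require Import reals.
Set Implicit Arguments. Unset Strict Implicit. Unset Printing Implicit Defensive.
Import Order.TTheory GRing.Theory Num.Theory.
Local Open Scope ring_scope.

Section GDD.
Variable R : realType.
Variable n : nat.
Variable X : 'I_n -> finType.

(* A (partial) assignment: Some v on the assigned variables, None elsewhere.
   An assignment x_s of the variables in s is a pasg x with [asg_on s x]. *)
Definition pasg := {dffun forall i : 'I_n, option (X i)}.

Definition asg_on (s : {set 'I_n}) (x : pasg) : bool :=
  [forall i, (x i != None) == (i \in s)].

Definition restr (s : {set 'I_n}) (x : pasg) : pasg :=
  [ffun i => if i \in s then x i else None].

(* messages lambda_{c -> s}(x_s), indexed by (c, s) *)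
Definition msgs := {set 'I_n} -> {set 'I_n} -> pasg -> R.

Definition zero_msgs : msgs := fun _ _ _ => 0.

Variable x0 : forall i, X i.
Variable C : {set {set 'I_n}}.
Variable theta : {set 'I_n} -> pasg -> R.
Variable C' : {set {set 'I_n}}.
Variable S : {set 'I_n} -> {set {set 'I_n}}.

Definition Sm (c : {set 'I_n}) := S c :\ c.

Definition thetah (t : {set 'I_n}) (x : pasg) : R :=
  if t \in C then theta t x else 0.

Section Msgs.
Variable lam : msgs.

Definition gam (t : {set 'I_n}) (x : pasg) : R :=
  if t \in C' then \sum_(s in Sm t) lam t s (restr s x) else 0.

Definition lamin (t : {set 'I_n}) (x : pasg) : R :=
  \sum_(c' in C' | t \in Sm c') lam c' t x.

Definition lamminus (c s : {set 'I_n}) (x : pasg) : R :=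
  \sum_(c' in C' | (c' != c) && (s \in Sm c')) lam c' s x.

Definition belief (t : {set 'I_n}) (x : pasg) : R :=
  thetah t x + lamin t x - gam t x.

(* the expression maximized in the block update for c *)
Definition Fc (c : {set 'I_n}) (y : pasg) : R :=
  thetah c y + lamin c y +
  \sum_(s' in Sm c) (thetah s' (restr s' y) - gam s' (restr s' y)
                      + lamminus c s' (restr s' y)).

(* a canonical extension of x_s to an assignment of c (used only as the
   seed of the max below, which is over a nonempty set) *)
Definition ext (c s : {set 'I_n}) (xs : pasg) : pasg :=
  [ffun i => if i \in s then xs i else if i \in c then Some (x0 i) else None].

(* max_{x_{c \ s}} G(x_c), as a function of x_s *)
Definition maxext (c s : {set 'I_n}) (G : pasg -> R) (xs : pasg) : R :=
  \big[Num.max/G (ext c s xs)]_(y | asg_on c y && (restr s y == xs)) G y.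

Definition lamstar (c s : {set 'I_n}) (xs : pasg) : R :=
  - thetah s xs + gam s xs - lamminus c s xs
  + (#|Sm c|%:R)^-1 * maxext c s (Fc c) xs.

End Msgs.

Definition block_update (c : {set 'I_n}) (lam : msgs) : msgs :=
  fun c' s' x => if (c' == c) && (s' \in Sm c) then lamstar lam c s' x
                 else lam c' s' x.

Definition run (cs : seq {set 'I_n}) : msgs :=
  foldl (fun lam c => block_update c lam) zero_msgs cs.

Definition fixed_point (lam : msgs) : Prop :=
  forall c, c \in C' -> forall s, s \in Sm c -> forall xs, asg_on s xs ->
    block_update c lam c s xs = lam c s xs.

Definition T : {set {set 'I_n}} := C' :|: \bigcup_(c in C') S c.

End GDD.

From HB Require Import structures.
From mathcomp Require Import all_boot all_order all_algebra.
From mathcomp Require Import reals.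
From mathcomp Require Import ring.
Import Order.TTheory GRing.Theory Num.Theory.
Local Open Scope ring_scope.

(* At a fixed point the block update for c gives, for every s in S(c)\{c},
   b_s(x_s) = (1/k) max_{x_c ext x_s} F_c(x_c) with k = |S(c)\{c}|, while by
   definition b_c(x_c) = F_c(x_c) - sum_s b_s(x_s).  Take x_c maximizing F_c:
   each b_s is maximized at the restriction of x_c, where it equals F_c(x_c)/k,
   so b_c(x_c) = 0; and for any y_c we have b_s(y_s) >= F_c(y_c)/k, hence
   b_c(y_c) <= 0. *)

Set Implicit Arguments. Unset Strict Implicit.

Lemma sum_inv_card (F : numFieldType) (T : finType) (A : {set T}) (v : F) :
  A != set0 -> \sum_(i in A) #|A|%:R^-1 * v = v.
Proof.
move=> A0; have kA : #|A|%:R != 0 :> F by rewrite pnatr_eq0 cards_eq0.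
by rewrite sumr_const -mulrnAl -mulr_natr mulVf ?mul1r.
Qed.

Lemma exists_argmax (R : realDomainType) (T : finType) (P : pred T) (f : T -> R) :
  (exists x, P x) -> exists2 y, P y & forall z, P z -> f z <= f y.
Proof. by case=> x Px; case: (arg_maxP f Px) => y Py ymax; exists y. Qed.

Section Assignments.
Variables (n : nat) (X : 'I_n -> finType).

Lemma asg_on_restr (c s : {set 'I_n}) (y : pasg X) :
  s \subset c -> asg_on c y -> asg_on s (restr s y).
Proof.
move=> sc /forallP hy; apply/forallP => i; rewrite ffunE.
case: ifP => his; last by rewrite eqxx.
by have := hy i; rewrite (subsetP sc _ his) => /eqP ->.
Qed.

Lemma exists_asg_on (x0 : forall i, X i) (c : {set 'I_n}) :
  exists y : pasg X, asg_on c y.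
Proof.
exists [ffun i => if i \in c then Some (x0 i) else None].
by apply/forallP => i; rewrite ffunE; case: ifP.
Qed.

Variable x0 : forall i, X i.

Lemma asg_on_ext (c s : {set 'I_n}) (xs : pasg X) :
  s \subset c -> asg_on s xs -> asg_on c (ext x0 c s xs).
Proof.
move=> sc /forallP hx; apply/forallP => i; rewrite ffunE.
case: ifP => [his | _]; last by case: ifP.
by have := hx i; rewrite his (subsetP sc _ his).
Qed.

Lemma restr_ext (c s : {set 'I_n}) (xs : pasg X) :
  asg_on s xs -> restr s (ext x0 c s xs) = xs.
Proof.
move=> /forallP hx; apply/ffunP => i; rewrite !ffunE.
case: ifP => his; first by rewrite his.
by have := hx i; rewrite his => /eqP; case: (xs i).
Qed.

Section Maxext.
Variables (R : realType) (c s : {set 'I_n}) (G : pasg X -> R).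
Hypothesis sc : s \subset c.

Lemma le_maxext (y : pasg X) :
  asg_on c y -> G y <= maxext x0 c s G (restr s y).
Proof. by move=> hy; apply: le_bigmax_cond; rewrite hy eqxx. Qed.

Lemma maxext_le (xs : pasg X) (M : R) :
  asg_on s xs -> (forall y, asg_on c y -> G y <= M) -> maxext x0 c s G xs <= M.
Proof.
move=> hxs hM; apply: bigmax_le; first exact/hM/asg_on_ext.
by move=> y /andP [hy _]; apply: hM.
Qed.

Lemma maxext_restr_argmax (ys : pasg X) :
  asg_on c ys -> (forall y, asg_on c y -> G y <= G ys) ->
  maxext x0 c s G (restr s ys) = G ys.
Proof.
move=> hys ymax; apply/eqP; rewrite eq_le le_maxext // andbT.
exact/maxext_le/ymax/(asg_on_restr sc).
Qed.

End Maxext.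
End Assignments.

Section Beliefs.
Variables (R : realType) (n : nat) (X : 'I_n -> finType).
Variables (C : {set {set 'I_n}}) (theta : {set 'I_n} -> pasg X -> R).
Variables (C' : {set {set 'I_n}}) (S : {set 'I_n} -> {set {set 'I_n}}).
Variables (lam : msgs R X) (c : {set 'I_n}).
Hypothesis hc : c \in C'.

Local Notation b := (belief C theta C' S lam).
Local Notation F := (Fc C theta C' S lam c).

Lemma lamin_Sm (s : {set 'I_n}) (x : pasg X) : s \in Sm S c ->
  lamin C' S lam s x = lam c s x + lamminus C' S lam c s x.
Proof.
move=> hs; rewrite /lamin /lamminus (bigD1 c) /=; last by rewrite hc hs.
congr (_ + _); apply: eq_bigl => c'.
by case: (c' \in C'); case: (c' != c); case: (s \in Sm S c').
Qed.

Lemma belief_Fc (y : pasg X) :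
  b c y = F y - \sum_(s in Sm S c) b s (restr s y).
Proof.
rewrite /belief /Fc /gam hc.
have -> : \sum_(s in Sm S c) lam c s (restr s y) =
    \sum_(s in Sm S c) (b s (restr s y)
      - (thetah C theta s (restr s y) - gam C' S lam s (restr s y)
         + lamminus C' S lam c s (restr s y))).
  by apply: eq_bigr => s hs; rewrite /belief lamin_Sm //; ring.
by rewrite sumrB; ring.
Qed.

Variable x0 : forall i, X i.
Hypothesis hfix : fixed_point x0 C theta C' S lam.

Lemma belief_fixed_point (s : {set 'I_n}) (xs : pasg X) :
  s \in Sm S c -> asg_on s xs ->
  b s xs = #|Sm S c|%:R^-1 * maxext x0 c s F xs.
Proof.
move=> hs hxs; have := hfix hc hs hxs.
rewrite /block_update eqxx hs /= => fixed_s.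
by rewrite /belief lamin_Sm // -fixed_s /lamstar; ring.
Qed.

Hypothesis hsub : forall s, s \in Sm S c -> s \subset c.
Hypothesis hne : Sm S c != set0.
Variable ys : pasg X.
Hypothesis hys : asg_on c ys.
Hypothesis ymax : forall y, asg_on c y -> F y <= F ys.

Let k := #|Sm S c|%:R : R.

Let k_gt0 : 0 < k.
Proof. by rewrite ltr0n lt0n cards_eq0. Qed.

Lemma belief_Sm_restr_argmax (s : {set 'I_n}) :
  s \in Sm S c -> b s (restr s ys) = k^-1 * F ys.
Proof.
move=> hs; rewrite belief_fixed_point //; last exact: asg_on_restr (hsub hs) hys.
by rewrite maxext_restr_argmax // hsub.
Qed.

Lemma belief_Sm_argmax (s : {set 'I_n}) (xs : pasg X) :
  s \in Sm S c -> asg_on s xs -> b s xs <= b s (restr s ys).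
Proof.
move=> hs hxs; rewrite belief_fixed_point // belief_Sm_restr_argmax //.
by rewrite ler_pM2l ?invr_gt0 // maxext_le // hsub.
Qed.

Lemma belief_argmax (y : pasg X) : asg_on c y -> b c y <= b c ys.
Proof.
move=> hy; have -> : b c ys = 0.
  rewrite belief_Fc (eq_bigr _ belief_Sm_restr_argmax).
  by rewrite sum_inv_card // subrr.
rewrite belief_Fc subr_le0 -{1}(sum_inv_card (F y) hne).
apply: ler_sum => s hs; rewrite belief_fixed_point //; last first.
  exact: asg_on_restr (hsub hs) hy.
by rewrite ler_pM2l ?invr_gt0 // le_maxext.
Qed.

End Beliefs.

Theorem proposition4 (R : realType) (n : nat) (X : 'I_n -> finType)
    (x0 : forall i, X i)
    (C : {set {set 'I_n}}) (theta : {set 'I_n} -> pasg X -> R)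
    (C' : {set {set 'I_n}}) (S : {set 'I_n} -> {set {set 'I_n}})
    (hS_sub : forall c, c \in C' -> forall s, s \in S c -> s \subset c)
    (hS_ne : forall c, c \in C' -> Sm S c != set0)
    (hC : C \subset T C' S)
    (cs : seq {set 'I_n}) (hcs : all (mem C') cs)
    (hfix : fixed_point x0 C theta C' S (run x0 C theta C' S cs)) :
  let lam := run x0 C theta C' S cs in
  let b := belief C theta C' S lam in
  forall c, c \in C' -> forall s, s \in Sm S c ->
  exists (xc xs : pasg X),
    [/\ asg_on c xc /\ (forall y, asg_on c y -> b c y <= b c xc),
        asg_on s xs /\ (forall y, asg_on s y -> b s y <= b s xs)
      & restr s xc = xs].
Proof.
move=> lam b c hc s hs.
have hsub s' : s' \in Sm S c -> s' \subset c.
  by rewrite /Sm in_setD1 => /andP [_]; apply: hS_sub.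
have [ys hys ymax] := exists_argmax (Fc C theta C' S lam c) (exists_asg_on x0 c).
have opt_c := belief_argmax hc hfix hsub (hS_ne c hc) hys ymax.
have opt_s := belief_Sm_argmax hc hfix hsub (hS_ne c hc) hys ymax hs.
exists ys, (restr s ys); split=> //; split=> //.
exact: asg_on_restr (hsub s hs) hys.
Qed.
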